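(* For the cyclically closed $2\times2\times M$ lattice model described in the context, with arbitrary real couplings $(J_\alpha)_{\alpha\in\Phi}$ and temperature $T>0$, let $Z_M=\sum_\sigma \exp(-\mathcal H(\sigma)/(k_BT))$ (sum over all $\sigma\in\{-1,1\}^{4M}$), let $Z'_M$ be the same sum restricted to non-percolation configurations, and let $P_M=Z'_M/Z_M$ be the non-percolation probability. Let $\lambda_{\max}$ be the largest real root of the characteristic equation of the $4\times4$ matrix $\tau$, and $\mu_{\max}$ the largest real root of the characteristic equation of the $3\times3$ matrix $\tau'$, both defined in the context. Then $$\lim_{M\to\infty}\frac{\ln P_M}{M}=\ln\frac{\mu_{\max}}{\lambda_{\max}}.$$
   Context: Lattice: sites $t_i^m$, $i\in\{0,1,2,3\}$, $m\in\{0,\dots,M-1\}$, with cyclic closure $t_i^M\equiv t_i^0$; each site carries a spin $\sigma_{t_i^m}=\sigma_i^m\in\{-1,1\}$. For a set $\Omega$ of sites, $\sigma_\Omega=\prod_{t\in\Omega}\sigma_t$. For fixed $m$ write $a_i=t_i^m$, $b_i=t_i^{m+1}$, and $C_m=\{a_0,\dots,a_3,b_0,\dots,b_3\}$. Let $\rho$ be the rotation $\rho(a_i)=a_{i+1\bmod4}$, $\rho(b_i)=b_{i+1\bmod 4}$. Generating supports $\Phi=\Phi_2\cup\Phi_4\cup\Phi_6\cup\Phi_8$: $\Phi_2=\{\{a_0,a_1\},\{a_0,a_2\},\{b_0,b_1\},\{b_0,b_2\},\{a_0,b_0\},\{a_0,b_1\},\{a_0,b_2\},\{a_0,b_3\}\}$;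 $\Phi_4$ consists of the 22 sets $\{a_0,b_0,b_1,b_2\}$, $\{a_0,b_1,b_2,b_3\}$, $\{a_0,b_2,b_3,b_0\}$, $\{a_0,b_3,b_0,b_1\}$, $\{a_0,a_1,b_0,b_1\}$, $\{a_0,a_1,b_1,b_2\}$, $\{a_0,a_1,b_2,b_3\}$, $\{a_0,a_1,b_3,b_0\}$, $\{a_0,a_1,b_0,b_2\}$, $\{a_0,a_1,b_1,b_3\}$, $\{a_0,a_2,b_0,b_1\}$, $\{a_0,a_2,b_1,b_2\}$, $\{a_0,a_2,b_2,b_3\}$, $\{a_0,a_2,b_3,b_0\}$, $\{a_0,a_2,b_0,b_2\}$, $\{a_0,a_2,b_1,b_3\}$, $\{a_0,a_1,a_2,b_0\}$, $\{a_0,a_1,a_2,b_1\}$, $\{a_0,a_1,a_2,b_2\}$, $\{a_0,a_1,a_2,b_3\}$, $\{a_0,a_1,a_2,a_3\}$, $\{b_0,b_1,b_2,b_3\}$; $\Phi_6=\{C_m\setminus\beta:\beta\in\Phi_2\}$; $\Phi_8=\{C_m\}$. Couplings $J_\alpha\in\mathbb R$ ($\alpha\in\Phi$), independent of $m$. $\mathcal H^m=-\sum_{\alpha\in\Phi}J_\alpha\sum_{r=0}^3\sigma_{\rho^r(\alpha)}$, $\mathcal H=\sum_{m=0}^{M-1}\mathcal H^m$. Percolation: a configuration is a percolation configuration if for some $m\in\{0,\dots,M-1\}$ one of $\sigma_0^m=\sigma_1^m=-1$, $\sigma_1^m=\sigma_2^m=-1$, $\sigma_2^m=\sigma_3^m=-1$,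 $\sigma_3^m=\sigma_0^m=-1$ holds; otherwise it is a non-percolation configuration. Transfer matrices: index a layer state $(s_0,\dots,s_3)\in\{-1,1\}^4$ by $k=1+\sum_{i=0}^3 2^i(1-s_i)/2$. $\theta_{k,l}=\exp(-\mathcal H^m/(k_BT))$ with layer $m$ in state $k$ and layer $m+1$ in state $l$. $\tau$ is $4\times4$ with $\tau_{i,j}=\sum_{l\in G_j}\theta_{r_i,l}$, $(r_1,\dots,r_4)=(1,2,4,6)$, $G_1=\{1,16\}$, $G_2=\{2,3,5,8,9,12,14,15\}$, $G_3=\{4,7,10,13\}$, $G_4=\{6,11\}$. $\tau'$ is $3\times3$ with $\tau'_{i,j}=\sum_{l\in G'_j}\theta_{r'_i,l}$, $(r'_1,r'_2,r'_3)=(1,2,6)$, $G'_1=\{1\}$, $G'_2=\{2,3,5,9\}$, $G'_3=\{6,11\}$. *)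

From HB Require Import structures.
From mathcomp Require Import all_boot all_order all_algebra.
From mathcomp Require Import all_classical all_reals all_analysis.
Set Implicit Arguments. Unset Strict Implicit. Unset Printing Implicit Defensive.
Import Order.TTheory GRing.Theory Num.Theory.
Local Open Scope ring_scope.

(* Sites of C_m: (0,i) = a_i = t_i^m ,  (1,i) = b_i = t_i^{m+1}. *)
Definition Site := ('I_2 * 'I_4)%type.
Definition a (i : nat) : Site := (@inord 1 0, @inord 3 i).
Definition b (i : nat) : Site := (@inord 1 1, @inord 3 i).

(* A layer state: (s_0,..,s_3); the boolean is true iff the spin is -1. *)
Definition layer := {ffun 'I_4 -> bool}.
Definition spin {R : pzRingType} (x : bool) : R := if x then -1 else 1.

Definition Phi2 : seq {set Site} :=
  [:: [set a 0; a 1]; [set a 0; a 2]; [set b 0; b 1]; [set b 0; b 2];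
      [set a 0; b 0]; [set a 0; b 1]; [set a 0; b 2]; [set a 0; b 3]].

Definition Phi4 : seq {set Site} :=
  [:: [set a 0; b 0; b 1; b 2]; [set a 0; b 1; b 2; b 3];
      [set a 0; b 2; b 3; b 0]; [set a 0; b 3; b 0; b 1];
      [set a 0; a 1; b 0; b 1]; [set a 0; a 1; b 1; b 2];
      [set a 0; a 1; b 2; b 3]; [set a 0; a 1; b 3; b 0];
      [set a 0; a 1; b 0; b 2]; [set a 0; a 1; b 1; b 3];
      [set a 0; a 2; b 0; b 1]; [set a 0; a 2; b 1; b 2];
      [set a 0; a 2; b 2; b 3]; [set a 0; a 2; b 3; b 0];
      [set a 0; a 2; b 0; b 2]; [set a 0; a 2; b 1; b 3];
      [set a 0; a 1; a 2; b 0]; [set a 0; a 1; a 2; b 1];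
      [set a 0; a 1; a 2; b 2]; [set a 0; a 1; a 2; b 3];
      [set a 0; a 1; a 2; a 3]; [set b 0; b 1; b 2; b 3]].

Definition Phi6 : seq {set Site} := [seq ~: beta | beta <- Phi2].
Definition Phi8 : seq {set Site} := [:: [set: Site]].

(* Phi as a set of supports (duplicates, if any, are identified). *)
Definition Phi : {set {set Site}} := [set S in Phi2 ++ Phi4 ++ Phi6 ++ Phi8].

Definition rot (r : nat) (O : {set Site}) : {set Site} :=
  [set ((t.1, @inord 3 ((nat_of_ord t.2 + r) %% 4)) : Site) | t : Site in O].

Definition sigmaO {R : pzRingType} (sa sb : layer) (O : {set Site}) : R :=
  \prod_(t in O) spin (if t.1 == ord0 then sa t.2 else sb t.2).

Definition Hm {R : pzRingType} (J : {set Site} -> R) (sa sb : layer) : R :=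
  - \sum_(al in Phi) J al * \sum_(r < 4) sigmaO sa sb (rot r al).

(* Configurations of the cyclic 2x2xM lattice: sigma m i = true iff sigma_i^m = -1 *)
Definition config (M : nat) := {ffun 'I_M -> layer}.

Definition Ham {R : pzRingType} (J : {set Site} -> R) (M : nat) (s : config M) : R :=
  \sum_(m < M) Hm J (s m) (s (ordS m)).

Definition percolation (M : nat) (s : config M) : bool :=
  [exists m : 'I_M, exists i : 'I_4, s m i && s m (ordS i)].

Section Model.
Variable R : realType.

Definition Z (J : {set Site} -> R) (kB T : R) (M : nat) : R :=
  \sum_(s : config M) expR (- Ham J s / (kB * T)).

Definition Z' (J : {set Site} -> R) (kB T : R) (M : nat) : R :=
  \sum_(s : config M | ~~ percolation s) expR (- Ham J s / (kB * T)).

Definition PM (J : {set Site} -> R) (kB T : R) (M : nat) : R := Z' J kB T M / Z J kB T M.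

(* layer state with index k = 1 + sum_i 2^i (1-s_i)/2 *)
Definition state_of_index (k : nat) : layer := [ffun i : 'I_4 => odd (k.-1 %/ 2 ^ i)].

Definition theta (J : {set Site} -> R) (kB T : R) (k l : nat) : R :=
  expR (- Hm J (state_of_index k) (state_of_index l) / (kB * T)).

Definition rows_tau : seq nat := [:: 1; 2; 4; 6].
Definition G_tau : seq (seq nat) :=
  [:: [:: 1; 16]; [:: 2; 3; 5; 8; 9; 12; 14; 15]; [:: 4; 7; 10; 13]; [:: 6; 11]].
Definition rows_tau' : seq nat := [:: 1; 2; 6].
Definition G_tau' : seq (seq nat) := [:: [:: 1]; [:: 2; 3; 5; 9]; [:: 6; 11]].

Definition tau (J : {set Site} -> R) (kB T : R) : 'M[R]_4 :=
  \matrix_(i < 4, j < 4)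
    \sum_(l <- nth [::] G_tau j) theta J kB T (nth 0%N rows_tau i) l.

Definition tau' (J : {set Site} -> R) (kB T : R) : 'M[R]_3 :=
  \matrix_(i < 3, j < 3)
    \sum_(l <- nth [::] G_tau' j) theta J kB T (nth 0%N rows_tau' i) l.

End Model.

From Pilot Require Import Defs.
From HB Require Import structures.
From mathcomp Require Import all_boot all_order all_algebra.
From mathcomp Require Import all_classical all_reals all_analysis.
From mathcomp Require Import lra ring.
Set Implicit Arguments.
Unset Strict Implicit.
Unset Printing Implicit Defensive.
Import Order.TTheory GRing.Theory Num.Theory.
Import numFieldNormedType.Exports.

(* Z_M and Z'_M are traces of the M-th powers of the transfer kernel
   W x y = exp (- H^m(x, y) / (k_B T)) between consecutive layer states and of
   its restriction W' to layers without two adjacent -1 spins.  W is invariant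
   under rotating or globally flipping both layers, W' under rotating them, and
   tau, tau' are the lumpings of W, W' onto the classes of these symmetries.
   For a positive matrix A whose characteristic polynomial has largest real
   root lam, the resolvent (t - A)^-1 is entrywise positive for every t > lam:
   it is for large t, and a nonnegative resolvent has no zero entry, so by
   continuity no entry can vanish on (lam, +oo).  Its row sums give y > 0 with
   A y <= t y, and the modulus of a real eigenvector gives z >= 0, z <> 0, with
   lam z <= A z.  Lifted along the lumping they squeeze the traces between
   c lam^M and 16 t^M, so ln Z_M / M -> ln lam and ln Z'_M / M -> ln mu. *)

Local Open Scope classical_set_scope.
Local Open Scope ring_scope.

Section PerronRoot.
Variables (R : realType) (n : nat) (A : 'M[R]_n.+1).
Hypothesis A_gt0 : forall i j, 0 < A i j.

Lemma horner_char_poly_mx t : map_mx (horner_eval t) (char_poly_mx A) = t%:M - A.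
Proof.
apply/matrixP => i j; rewrite !mxE /horner_eval.
by rewrite hornerD hornerN hornerMn hornerX hornerC.
Qed.

Lemma horner_char_poly t : (char_poly A).[t] = \det (t%:M - A).
Proof. by rewrite -horner_char_poly_mx det_map_mx. Qed.

Lemma sum_scalar_sub_mx t (x : 'I_n.+1 -> R) i :
  \sum_k (t%:M - A) i k * x k = t * x i - \sum_k A i k * x k.
Proof.
under eq_bigr do rewrite !mxE mulrBl.
rewrite sumrB (bigD1 i) //= eqxx mulr1n big1 ?addr0 // => k /negbTE.
by rewrite eq_sym => ->; rewrite mulr0n mul0r.
Qed.

(* Cramer's rule for the entries of [(t - A)^-1]. *)
Definition resolvent t i j := (\adj (char_poly_mx A) i j).[t] / (char_poly A).[t].

Lemma resolventP t i j : (char_poly A).[t] != 0 ->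
  t * resolvent t i j = (i == j)%:R + \sum_k A i k * resolvent t k j.
Proof.
move=> Pt; apply/eqP; rewrite -subr_eq -(sum_scalar_sub_mx t (fun k => resolvent t k j)).
have /matrixP/(_ i j) := congr1 (map_mx (horner_eval t)) (mul_mx_adj (char_poly_mx A)).
rewrite map_mxM horner_char_poly_mx map_scalar_mx !mxE => adjE; apply/eqP.
transitivity ((\sum_k (t%:M - A) i k * map_mx (horner_eval t) (\adj (char_poly_mx A)) k j)
              / (char_poly A).[t]).
  by rewrite mulr_suml; apply: eq_bigr => k _; rewrite [map_mx _ _ _ _]mxE mulrA.
by rewrite adjE mulrnAl mulfV.
Qed.

Lemma dominant_ge0 t (x : 'I_n.+1 -> R) : (forall i, \sum_j A i j < t) ->
  (forall i, \sum_k A i k * x k <= t * x i) -> forall i, 0 <= x i.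
Proof.
move=> rowA Ax_le.
have [i0 _ x_min] := @arg_minP _ _ _ ord0 predT x isT.
suff x0_ge0 : 0 <= x i0 by move=> i; exact: le_trans x0_ge0 (x_min i isT).
rewrite leNgt; apply/negP => x0_lt0.
have : (\sum_k A i0 k) * x i0 <= \sum_k A i0 k * x k.
  by rewrite mulr_suml; apply: ler_sum => k _; rewrite ler_wpM2l ?x_min // ltW.
have := Ax_le i0; have := rowA i0; nra.
Qed.

Lemma resolvent_gt0_of_ge0 t : 0 < t -> (char_poly A).[t] != 0 ->
  (forall i j, 0 <= resolvent t i j) -> forall i j, 0 < resolvent t i j.
Proof.
move=> t_gt0 Pt B_ge0.
have sum_ge k j : A k j * resolvent t j j <= \sum_l A k l * resolvent t l j.
  by rewrite (bigD1 j) //= lerDl; apply: sumr_ge0 => l _; rewrite mulr_ge0 // ltW.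
have diag_gt0 j : 0 < resolvent t j j.
  have : 0 < t * resolvent t j j.
    rewrite resolventP // eqxx ltr_pwDl //.
    by apply: sumr_ge0 => k _; rewrite mulr_ge0 // ltW.
  by rewrite pmulr_rgt0.
move=> i j; have := resolventP i j Pt; have := sum_ge i j.
have := diag_gt0 j; have := A_gt0 i j; have := B_ge0 i j.
have : (0 : R) <= (i == j)%:R by rewrite ler0n.
nra.
Qed.

Lemma bigmin_continuous (I : Type) (s : seq I) (F : I -> R -> R) (f0 : R -> R) x :
  {for x, continuous f0} -> (forall i, {for x, continuous (F i)}) ->
  {for x, continuous (fun t => \big[Num.min/f0 t]_(i <- s) F i t)}.
Proof.
move=> f0_cont F_cont; elim: s => [|i s IHs].
  by rewrite (_ : (fun t => _) = f0) //; apply: funext => t; rewrite big_nil.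
rewrite (_ : (fun t => _) = F i \min (fun t => \big[Num.min/f0 t]_(j <- s) F j t)).
  exact: continuous_min.
by apply: funext => t; rewrite big_cons.
Qed.

Definition min_resolvent t :=
  \big[Num.min/resolvent t ord0 ord0]_(p : 'I_n.+1 * 'I_n.+1) resolvent t p.1 p.2.

Lemma min_resolvent_le t i j : min_resolvent t <= resolvent t i j.
Proof. exact: (bigmin_le _ (i, j) (fun p => resolvent t p.1 p.2)). Qed.

Lemma min_resolventP t : exists p : 'I_n.+1 * 'I_n.+1, min_resolvent t = resolvent t p.1 p.2.
Proof.
rewrite /min_resolvent; elim/big_ind: _ => [|x y [p ->] [q ->]|p _]; last by exists p.
- by exists (ord0, ord0).
- by rewrite /Num.min; case: ifP => _; [exists p | exists q].
Qed.

Lemma min_resolvent_continuous x : (char_poly A).[x] != 0 ->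
  {for x, continuous min_resolvent}.
Proof.
move=> Px; have resolvent_cont i j : {for x, continuous (fun t => resolvent t i j)}.
  apply: (@continuousM _ _ (horner (\adj (char_poly_mx A) i j))
                            (fun t => (char_poly A).[t]^-1)).
    exact: continuous_horner.
  by apply: continuousV => //; exact: continuous_horner.
by apply: bigmin_continuous => [|p]; apply: resolvent_cont.
Qed.

Section TopRealRoot.
Variable lam : R.
Hypothesis lam_max : forall x, root (char_poly A) x -> x <= lam.

Lemma char_poly_neq0 t : lam < t -> (char_poly A).[t] != 0.
Proof. by move=> lam_lt; apply: contraTN lam_lt => /lam_max; rewrite leNgt. Qed.

Lemma resolvent_gt0_large t : lam < t -> (forall i, \sum_j A i j < t) ->
  forall i j, 0 < resolvent t i j.
Proof.
move=> lam_lt rowA; have Pt := char_poly_neq0 lam_lt.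
have t_gt0 : 0 < t.
  apply: le_lt_trans (rowA ord0); apply: sumr_ge0 => j _; exact: ltW.
apply: resolvent_gt0_of_ge0 => // i j.
apply: (@dominant_ge0 t (fun k => resolvent t k j)) => // k.
by rewrite resolventP // lerDr ler0n.
Qed.

Lemma resolvent_gt0 t : 0 < t -> lam < t -> forall i j, 0 < resolvent t i j.
Proof.
move=> t_gt0 lam_lt i j; rewrite ltNge; apply/negP => Bij_le0.
pose t' := t + \sum_i \sum_j A i j.
have A_ge0 : 0 <= \sum_i \sum_j A i j.
  by apply: sumr_ge0 => k _; apply: sumr_ge0 => l _; exact: ltW.
have t_le : t <= t' by rewrite lerDl.
have row_lt k : \sum_j A k j < t'.
  have : \sum_j A k j <= \sum_i \sum_j A i j.
    rewrite [X in _ <= X](bigD1 k) //= lerDl.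
    by apply: sumr_ge0 => l _; apply: sumr_ge0 => m _; exact: ltW.
  rewrite /t'; lra.
have min_gt0 : 0 < min_resolvent t'.
  have [p ->] := min_resolventP t'.
  by apply: resolvent_gt0_large => //; exact: lt_le_trans t_le.
have min_cont : {within `[t, t'], continuous min_resolvent}.
  apply: continuous_in_subspaceT => u; rewrite inE /= in_itv /= => /andP[t_le_u _].
  by apply: min_resolvent_continuous; apply: char_poly_neq0; exact: lt_le_trans t_le_u.
have min_between : Num.min (min_resolvent t) (min_resolvent t') <= 0 <=
                   Num.max (min_resolvent t) (min_resolvent t').
  by rewrite ge_min (le_trans (min_resolvent_le t i j)) // le_max (ltW min_gt0) orbT.
(* The smallest entry vanishes somewhere on [[t, t']], but there the
   resolvent is nonnegative, hence positive. *)
have [c] := IVT t_le min_cont min_between.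
rewrite in_itv /= => /andP[t_le_c _] min_c0.
have Pc : (char_poly A).[c] != 0 by apply: char_poly_neq0; exact: lt_le_trans t_le_c.
have Bc_ge0 k l : 0 <= resolvent c k l by rewrite -min_c0 min_resolvent_le.
have [p min_cE] := min_resolventP c.
have := resolvent_gt0_of_ge0 (lt_le_trans t_gt0 t_le_c) Pc Bc_ge0 p.1 p.2.
by rewrite -min_cE min_c0 ltxx.
Qed.

Lemma perron_bound_gt0 : 0 < lam.
Proof.
rewrite ltNge; apply/negP => lam_le0.
pose t := A ord0 ord0 / 2; have A00_gt0 := A_gt0 ord0 ord0.
have t_gt0 : 0 < t by rewrite divr_gt0.
have B_gt0 := resolvent_gt0 t_gt0 (le_lt_trans lam_le0 t_gt0).
have sum_ge : A ord0 ord0 * resolvent t ord0 ord0 <=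
              \sum_k A ord0 k * resolvent t k ord0.
  rewrite (bigD1 ord0) //= lerDl.
  by apply: sumr_ge0 => k _; rewrite mulr_ge0 // ltW.
have := resolventP ord0 ord0 (char_poly_neq0 (le_lt_trans lam_le0 t_gt0)).
rewrite eqxx mulr1n; have := B_gt0 ord0 ord0; move: sum_ge; rewrite /t; nra.
Qed.

Lemma perron_supersolution t : lam < t -> exists2 y : 'I_n.+1 -> R,
  forall i, 0 < y i & forall i, \sum_k A i k * y k <= t * y i.
Proof.
move=> lam_lt; have t_gt0 := lt_trans perron_bound_gt0 lam_lt.
have B_gt0 := resolvent_gt0 t_gt0 lam_lt.
exists (fun i => \sum_j resolvent t i j) => [i|i].
  rewrite (bigD1 ord0) //= ltr_pwDl ?B_gt0 //.
  by apply: sumr_ge0 => j _; exact/ltW/B_gt0.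
rewrite mulr_sumr; under eq_bigr do rewrite mulr_sumr.
rewrite exchange_big /=; apply: ler_sum => j _.
by rewrite resolventP ?char_poly_neq0 // lerDr ler0n.
Qed.

End TopRealRoot.

Lemma perron_subsolution lam : root (char_poly A) lam -> exists z : 'I_n.+1 -> R,
  [/\ forall i, 0 <= z i, exists i, 0 < z i &
      forall i, lam * z i <= \sum_k A i k * z k].
Proof.
rewrite rootE horner_char_poly -det_tr => /det0P[v v_neq0 vE].
have eigv i : lam * v 0 i = \sum_k A i k * v 0 k.
  apply/eqP; rewrite -subr_eq0 -(sum_scalar_sub_mx lam (fun k => v 0 k)).
  move/matrixP: vE => /(_ 0 i); rewrite !mxE => vE.
  by apply/eqP; rewrite -[RHS]vE; apply: eq_bigr => k _; rewrite mulrC [_^T _ _]mxE.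
exists (fun i => `|v 0 i|); split => [i|| i].
- exact: normr_ge0.
- have /existsP[i vi_neq0] : [exists i, v 0 i != 0].
    apply: contraR v_neq0 => /existsPn v0; apply/eqP/rowP => i.
    by rewrite mxE; apply/eqP; rewrite -[_ == _]negbK v0.
  by exists i; rewrite normr_gt0.
- apply: le_trans (_ : `|lam * v 0 i| <= _); first by rewrite normrM ler_wpM2r // ler_norm.
  rewrite eigv; apply: le_trans (ler_norm_sum _ _ _) _.
  by apply: ler_sum => k _; rewrite normrM ger0_norm // ltW.
Qed.

End PerronRoot.

Section GrowthRate.
Variable R : realType.

Lemma div_nat_lt_near (a e : R) : 0 < e -> \forall M \near \oo, a / M%:R < e.
Proof.
move=> e_gt0; near=> M.
have M_gt0 : 0 < M%:R :> R by near: M; exact: nbhs_infty_gtr.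
rewrite ltr_pdivrMr // mulrC -ltr_pdivrMr //.
by near: M; exact: nbhs_infty_gtr.
Unshelve. all: by end_near.
Qed.

Lemma ln_growth_cvg (u : nat -> R) (lam c : R) : 0 < lam -> 0 < c ->
  (forall M, c * lam ^+ M <= u M.+1) ->
  (forall t, lam < t -> exists K, forall M, u M.+1 <= K * t ^+ M) ->
  (fun M => ln (u M) / M%:R) @ \oo --> ln lam.
Proof.
move=> lam_gt0 c_gt0 u_ge u_le; apply/cvgrPdist_lt => e e_gt0.
have lam_lt : lam < lam * expR (e / 2).
  by rewrite -[X in X < _]mulr1 ltr_pM2l // expR_gt1 divr_gt0.
have [K uK] := u_le _ lam_lt.
near=> M.
have lo_near : (ln lam - ln c) / M%:R < e by near: M; exact: div_nat_lt_near.
have hi_near : (ln K - ln lam - e / 2) / M%:R < e / 2.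
  by near: M; apply: div_nat_lt_near; rewrite divr_gt0.
have [N MN] : exists N, M = N.+1.
  by exists M.-1; rewrite prednK //; near: M; exact: nbhs_infty_gt.
subst M.
have u_gt0 : 0 < u N.+1 by apply: lt_le_trans (u_ge N); rewrite mulr_gt0 ?exprn_gt0.
have K_gt0 : 0 < K.
  have := lt_le_trans u_gt0 (uK N).
  by rewrite pmulr_lgt0 // exprn_gt0 // mulr_gt0 // expR_gt0.
have ln_lo : ln c + N%:R * ln lam <= ln (u N.+1).
  by rewrite -ler_expR expRD expRM_natl !lnK ?posrE ?u_ge.
have ln_hi : ln (u N.+1) <= ln K + N%:R * (ln lam + e / 2).
  by rewrite -ler_expR expRD expRM_natl expRD !lnK ?posrE.
have M_gt0 : 0 < N.+1%:R :> R by rewrite ltr0Sn.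
rewrite ltr_pdivrMr // in lo_near; rewrite ltr_pdivrMr // in hi_near.
have -> : ln lam - ln (u N.+1) / N.+1%:R = (N.+1%:R * ln lam - ln (u N.+1)) / N.+1%:R.
  by field; rewrite gt_eqF.
rewrite normf_div (gtr0_norm M_gt0) ltr_pdivrMr // ltr_norml.
have NE : N.+1%:R = N%:R + 1 :> R by rewrite -natr1.
rewrite NE in lo_near hi_near *; apply/andP; split; nra.
Unshelve. all: by end_near.
Qed.

Lemma ln_div_cvg (u v : nat -> R) (a b : R) :
  (forall M, 0 < u M.+1) -> (forall M, 0 < v M.+1) ->
  (fun M => ln (u M) / M%:R) @ \oo --> a -> (fun M => ln (v M) / M%:R) @ \oo --> b ->
  (fun M => ln (v M / u M) / M%:R) @ \oo --> b - a.
Proof.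
move=> u_gt0 v_gt0 lnu lnv; apply: cvg_trans (cvgB lnv lnu).
apply: near_eq_cvg; near=> M.
have [N ->] : exists N, M = N.+1.
  by exists M.-1; rewrite prednK //; near: M; exact: nbhs_infty_gt.
by rewrite /= lnM ?lnV ?posrE ?invr_gt0 // mulrBl.
Unshelve. all: by end_near.
Qed.

End GrowthRate.

Section KernelPower.
Variables (R : realType) (L : finType) (V : L -> L -> R).

Fixpoint kpow k : L -> L -> R :=
  if k is k'.+1 then fun x y => \sum_z V x z * kpow k' z y
  else fun x y => (x == y)%:R.

Lemma sum_kpow0 x (F : L -> R) : \sum_y kpow 0 x y * F y = F x.
Proof.
rewrite (bigD1 x) //= eqxx mul1r big1 ?addr0 // => y /negbTE.
by rewrite eq_sym => ->; rewrite mul0r.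
Qed.

Lemma kpowSr k x y : kpow k.+1 x y = \sum_z kpow k x z * V z y.
Proof.
elim: k x y => [|k IHk] x y.
  rewrite sum_kpow0 /= (bigD1 y) //= eqxx mulr1 big1 ?addr0 // => z /negbTE ->.
  by rewrite mulr0.
transitivity (\sum_z V x z * kpow k.+1 z y) => //.
under eq_bigr do rewrite IHk mulr_sumr.
rewrite exchange_big; apply: eq_bigr => w _.
by rewrite /= mulr_suml; apply: eq_bigr => z _; rewrite mulrA.
Qed.

Definition fcons {n} (x : L) (g : {ffun 'I_n -> L}) : {ffun 'I_n.+1 -> L} :=
  [ffun i => if unlift ord0 i is Some j then g j else x].

Lemma fcons0 {n} x (g : {ffun 'I_n -> L}) : fcons x g ord0 = x.
Proof. by rewrite ffunE unlift_none. Qed.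

Lemma fconsS {n} x (g : {ffun 'I_n -> L}) j : fcons x g (lift ord0 j) = g j.
Proof. by rewrite ffunE liftK. Qed.

Lemma big_ffun_recl n (F : {ffun 'I_n.+1 -> L} -> R) :
  \sum_f F f = \sum_x \sum_(g : {ffun 'I_n -> L}) F (fcons x g).
Proof.
rewrite pair_big /= (reindex (fun p : L * {ffun 'I_n -> L} => fcons p.1 p.2)) //=.
exists (fun f => (f ord0, [ffun j => f (lift ord0 j)])) => [[x g] _ | f _] /=.
  by rewrite fcons0; congr pair; apply/ffunP => j; rewrite ffunE fconsS.
by apply/ffunP => i; rewrite ffunE; case: unliftP => [j ->|->]; rewrite ?ffunE.
Qed.

Lemma sum_path k (F : L -> L -> R) :
  \sum_(s : {ffun 'I_k.+1 -> L})
    (\prod_(i < k) V (s (widen_ord (leqnSn k) i)) (s (lift ord0 i))) *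
    F (s ord0) (s ord_max) =
  \sum_x \sum_y kpow k x y * F x y.
Proof.
elim: k F => [|k IHk] F.
  rewrite (_ : ord_max = ord0) ?big_ffun_recl; last exact: val_inj.
  apply: eq_bigr => x _; under eq_bigr do rewrite big_ord0 mul1r fcons0.
  by rewrite sum_kpow0 sumr_const card_ffun card_ord expn0.
have w0 : widen_ord (leqnSn k.+1) ord0 = ord0 by apply: val_inj.
have mS : ord_max = lift ord0 (ord_max : 'I_k.+1) by apply: val_inj.
rewrite big_ffun_recl; apply: eq_bigr => x _.
have inner g : \prod_(i < k) V (fcons x g (widen_ord (leqnSn k.+1) (lift ord0 i)))
                               (fcons x g (lift ord0 (lift ord0 i))) =
               \prod_(i < k) V (g (widen_ord (leqnSn k) i)) (g (lift ord0 i)).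
  apply: eq_bigr => i _.
  have -> : widen_ord (leqnSn k.+1) (lift ord0 i) = lift ord0 (widen_ord (leqnSn k) i).
    exact: val_inj.
  by rewrite !fconsS.
under eq_bigr do rewrite big_ord_recl w0 mS inner fcons0 !fconsS mulrAC mulrC.
rewrite (IHk (fun z y => V x z * F x y)) /=.
under [RHS]eq_bigr do rewrite mulr_suml.
rewrite exchange_big /=; apply: eq_bigr => z _.
by apply: eq_bigr => y _; rewrite mulrCA mulrA.
Qed.

Lemma sum_cycle k :
  \sum_(s : {ffun 'I_k.+1 -> L}) \prod_(m < k.+1) V (s m) (s (ordS m)) =
  \sum_x kpow k.+1 x x.
Proof.
under [RHS]eq_bigr do rewrite kpowSr.
rewrite -(sum_path k (fun x y => V y x)).
apply: eq_bigr => s _; rewrite big_ord_recr /=; congr (_ * V _ (s _)).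
  apply: eq_bigr => i _; congr (V _ (s _)); apply: val_inj => /=.
  by rewrite modn_small // ltnS.
by apply: val_inj => /=; rewrite modnn.
Qed.

Hypothesis V_ge0 : forall x y, 0 <= V x y.

Lemma kpow_ge0 k x y : 0 <= kpow k x y.
Proof.
elim: k x y => [|k IHk] x y; first exact: ler0n.
by apply: sumr_ge0 => z _; rewrite mulr_ge0.
Qed.

Lemma sum_kpowS k x (F : L -> R) :
  \sum_y kpow k.+1 x y * F y = \sum_z V x z * \sum_y kpow k z y * F y.
Proof.
rewrite /=; under eq_bigr do rewrite mulr_suml.
rewrite exchange_big /=; apply: eq_bigr => z _.
by rewrite mulr_sumr; apply: eq_bigr => y _; rewrite mulrA.
Qed.

Lemma kpow_super (Y : L -> R) t : 0 <= t ->
  (forall x, \sum_y V x y * Y y <= t * Y x) ->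
  forall k x, \sum_y kpow k x y * Y y <= t ^+ k * Y x.
Proof.
move=> t_ge0 VY; elim=> [|k IHk] x; first by rewrite sum_kpow0 mul1r.
rewrite sum_kpowS; apply: le_trans (_ : \sum_z V x z * (t ^+ k * Y z) <= _).
  by apply: ler_sum => z _; rewrite ler_wpM2l.
under eq_bigr do rewrite mulrCA.
by rewrite -mulr_sumr exprSr -mulrA ler_wpM2l ?exprn_ge0.
Qed.

Lemma kpow_sub (Z : L -> R) lam : 0 <= lam ->
  (forall x, lam * Z x <= \sum_y V x y * Z y) ->
  forall k x, lam ^+ k * Z x <= \sum_y kpow k x y * Z y.
Proof.
move=> lam_ge0 VZ k x.
have VnegZ y : \sum_z V y z * - Z z <= lam * - Z y.
  by under eq_bigr do rewrite mulrN; rewrite sumrN mulrN lerN2.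
rewrite -lerN2 -sumrN -mulrN; under eq_bigr do rewrite -mulrN.
exact: kpow_super.
Qed.

Lemma trace_kpow_le (Y : L -> R) t : 0 <= t -> (forall x, 0 < Y x) ->
  (forall x, \sum_y V x y * Y y <= t * Y x) ->
  forall k, \sum_x kpow k x x <= #|L|%:R * t ^+ k.
Proof.
move=> t_ge0 Y_gt0 VY k.
apply: le_trans (_ : _ <= \sum_(x : L) t ^+ k) _; last by rewrite sumr_const mulr_natl.
apply: ler_sum => x _; rewrite -(ler_pM2r (Y_gt0 x)).
apply: le_trans _ (kpow_super t_ge0 VY k x).
rewrite (bigD1 x) //= lerDl.
by apply: sumr_ge0 => y _; rewrite mulr_ge0 ?kpow_ge0 // ltW.
Qed.

Lemma pos_lower_bound (T : finType) (P : pred T) (f : T -> R) :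
  (forall x, P x -> 0 < f x) -> exists2 c, 0 < c & forall x, P x -> c <= f x.
Proof.
move=> f_gt0; exists (\big[Num.min/1]_(x | P x) f x).
  by apply: lt_bigmin => // x /f_gt0.
by move=> x Px; apply: bigmin_le_cond.
Qed.

Lemma trace_kpow_ge (Z : L -> R) lam x0 : 0 <= lam ->
  (forall x, 0 <= Z x) -> 0 < Z x0 ->
  (forall x y, 0 < Z x -> 0 < Z y -> 0 < V x y) ->
  (forall x, lam * Z x <= \sum_y V x y * Z y) ->
  exists2 c, 0 < c & forall k, c * lam ^+ k <= \sum_x kpow k.+1 x x.
Proof.
move=> lam_ge0 Z_ge0 Zx0_gt0 V_gt0 VZ.
pose supp z : R := if 0 < Z z then 1 else 0.
have [m m_gt0 m_le] : exists2 m, 0 < m & forall z, 0 < Z z -> m <= V z x0.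
  by apply: pos_lower_bound => z Zz_gt0; exact: V_gt0.
pose S := \sum_z Z z.
have S_gt0 : 0 < S by rewrite /S (bigD1 x0) //= ltr_pwDl // sumr_ge0.
(* Bound the diagonal entry at [x0]:
   [V^(k+1) x0 x0 >= m * \sum_(z | Z z > 0) V^k x0 z >= m * lam ^+ k * Z x0 / S]. *)
exists (m * Z x0 / S) => [|k]; first by rewrite !divr_gt0 ?mulr_gt0.
have Z_le z : Z z <= S * supp z.
  rewrite /supp; case: ltP => [Zz_gt0|Zz_le0]; last by rewrite mulr0.
  by rewrite mulr1 /S (bigD1 z) //= lerDl sumr_ge0.
have V_ge z : m * supp z <= V z x0.
  by rewrite /supp; case: ltP => [/m_le|_]; rewrite ?mulr1 ?mulr0.
apply: le_trans (_ : kpow k.+1 x0 x0 <= _); last first.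
  by rewrite (bigD1 x0) //= lerDl; apply: sumr_ge0 => x _; exact: (kpow_ge0 k.+1 x x).
have lo : lam ^+ k * Z x0 <= S * \sum_z kpow k x0 z * supp z.
  apply: le_trans (kpow_sub lam_ge0 VZ k x0) _; rewrite mulr_sumr.
  by apply: ler_sum => z _; rewrite mulrCA ler_wpM2l ?kpow_ge0.
have hi : m * \sum_z kpow k x0 z * supp z <= kpow k.+1 x0 x0.
  rewrite kpowSr mulr_sumr; apply: ler_sum => z _.
  by rewrite mulrCA ler_wpM2l ?kpow_ge0.
apply: le_trans hi; rewrite -!mulrA ler_wpM2l ?(ltW m_gt0) //.
rewrite mulrCA mulrC ler_pdivrMr //.
by move: lo; lra.
Qed.

End KernelPower.

Section LumpedKernel.
Variables (R : realType) (L : finType) (V : L -> L -> R) (D : pred L).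
Variables (n : nat) (A : 'M[R]_n.+1) (lab : L -> 'I_n.+1).
Hypothesis V_ge0 : forall x y, 0 <= V x y.
Hypothesis V_gt0 : forall x y, D x -> D y -> 0 < V x y.
Hypothesis V_eq0 : forall x y, ~~ (D x && D y) -> V x y = 0.
Hypothesis lab_surj : forall j, exists2 x, D x & lab x = j.
Hypothesis V_lump : forall x (v : 'I_n.+1 -> R), D x ->
  \sum_(y | D y) V x y * v (lab y) = \sum_j A (lab x) j * v j.

Lemma lumped_gt0 i j : 0 < A i j.
Proof.
have [[x Dx <-] [y Dy <-]] := (lab_surj i, lab_surj j).
have -> : A (lab x) (lab y) = \sum_(y' | D y') V x y' * (lab y' == lab y)%:R.
  rewrite (V_lump (fun k => (k == lab y)%:R)) // (bigD1 (lab y)) //= eqxx mulr1.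
  by rewrite big1 ?addr0 // => k /negbTE->; rewrite mulr0.
rewrite (bigD1 y) //= eqxx mulr1 ltr_pwDl ?V_gt0 //.
by apply: sumr_ge0 => z _; rewrite mulr_ge0 ?ler0n.
Qed.

Lemma sum_lift x (v : 'I_n.+1 -> R) c : D x ->
  \sum_y V x y * (if D y then v (lab y) else c) = \sum_j A (lab x) j * v j.
Proof.
move=> Dx; rewrite -V_lump // [LHS](bigID D) /= addrC big1 ?add0r => [|y NDy].
  by apply: eq_bigr => y ->.
by rewrite V_eq0 ?mul0r // (negbTE NDy) andbF.
Qed.

Variable lam : R.
Hypothesis lam_root : root (char_poly A) lam.
Hypothesis lam_max : forall x, root (char_poly A) x -> x <= lam.

Lemma lumped_trace_ge :
  exists2 c, 0 < c & forall k, c * lam ^+ k <= \sum_x kpow V k.+1 x x.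
Proof.
have lam_gt0 := perron_bound_gt0 lumped_gt0 lam_max.
have [z [z_ge0 [i zi_gt0] Az]] := perron_subsolution lumped_gt0 lam_root.
have [x0 Dx0 lab_x0] := lab_surj i.
pose Z x := if D x then z (lab x) else 0.
have Z_ge0 x : 0 <= Z x by rewrite /Z; case: ifP.
have Z_gt0 x : 0 < Z x -> D x by rewrite /Z; case: ifP => // _; rewrite ltxx.
apply: (@trace_kpow_ge _ _ _ V_ge0 Z lam x0) => //.
- exact: ltW.
- by rewrite /Z Dx0 lab_x0.
- by move=> x y /Z_gt0 Dx /Z_gt0 Dy; exact: V_gt0.
- move=> x; rewrite /Z; case: ifPn => [Dx|_]; last first.
    by rewrite mulr0; apply: sumr_ge0 => y _; exact: mulr_ge0 (V_ge0 x y) (Z_ge0 y).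
  by rewrite sum_lift //; exact: Az.
Qed.

Lemma lumped_trace_le t : lam < t ->
  forall k, \sum_x kpow V k x x <= #|L|%:R * t ^+ k.
Proof.
move=> lam_lt; have t_gt0 := lt_trans (perron_bound_gt0 lumped_gt0 lam_max) lam_lt.
have [y y_gt0 Ay] := perron_supersolution lumped_gt0 lam_max lam_lt.
apply: (@trace_kpow_le _ _ _ V_ge0 (fun x => if D x then y (lab x) else 1)).
- exact: ltW.
- by move=> x; case: ifP.
- move=> x; case: ifPn => [Dx|NDx]; first by rewrite sum_lift.
  by rewrite big1 ?mulr1 ?ltW // => x' _; rewrite V_eq0 ?mul0r // (negbTE NDx).
Qed.

Lemma ln_lumped_growth (u : nat -> R) : (forall M, u M.+1 = \sum_x kpow V M.+1 x x) ->
  [/\ 0 < lam, forall M, 0 < u M.+1 & (fun M => ln (u M) / M%:R) @ \oo --> ln lam].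
Proof.
move=> uE; have lam_gt0 := perron_bound_gt0 lumped_gt0 lam_max.
have [c c_gt0 u_ge] := lumped_trace_ge.
split=> // [M|].
  by rewrite uE; apply: lt_le_trans (u_ge M); rewrite mulr_gt0 ?exprn_gt0.
apply: (ln_growth_cvg lam_gt0 c_gt0) => [M|t lam_lt]; first by rewrite uE.
exists (#|L|%:R * t) => M; rewrite uE -mulrA -exprS.
exact: lumped_trace_le.
Qed.

End LumpedKernel.

Definition rot4 (p : nat) (i : 'I_4) : 'I_4 := inord ((i + p) %% 4)%N.

Lemma rot4E p i : rot4 p i = ((i + p) %% 4)%N :> nat.
Proof. by rewrite inordK // ltn_pmod. Qed.

Lemma rot4_inj p : injective (rot4 p).
Proof.
move=> i j /(congr1 val) /=; rewrite !rot4E => /eqP.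
by rewrite eqn_modDr !modn_small // => /eqP ij; apply: val_inj.
Qed.

Lemma rot4_rot4 p r i : rot4 p (rot4 r i) = rot4 (r + p)%N i.
Proof. by apply: val_inj => /=; rewrite !rot4E modnDml addnA. Qed.

Lemma rot4_mod m i : rot4 (m %% 4) i = rot4 m i.
Proof. by apply: val_inj => /=; rewrite !rot4E modnDmr. Qed.

Definition shift (p : nat) (t : Site) : Site := (t.1, rot4 p t.2).

Lemma shift_inj p : injective (shift p).
Proof. by move=> [t1 t2] [u1 u2] [-> /rot4_inj->]. Qed.

Lemma rotE r (O : {set Site}) : Defs.rot r O = shift r @: O.
Proof. by []. Qed.

Lemma shift_rot p r (O : {set Site}) : shift p @: Defs.rot r O = Defs.rot (r + p)%N O.
Proof.
rewrite !rotE -imset_comp; apply: eq_imset => t.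
by rewrite /shift /= rot4_rot4.
Qed.

Lemma rot_mod m (O : {set Site}) : Defs.rot (m %% 4) O = Defs.rot m O.
Proof. by rewrite !rotE; apply: eq_imset => t; rewrite /shift rot4_mod. Qed.

Lemma card_Site : #|{: Site}| = 8%N.
Proof. by rewrite card_prod !card_ord. Qed.

Lemma Phi_even O : O \in Phi -> ~~ odd #|O|.
Proof.
have even24 : all (fun X : {set Site} => ~~ odd #|X|) (Phi2 ++ Phi4).
  rewrite /= -!finset.setUA !cardsU1 !cards1 !inE /a /b !xpair_eqE -!val_eqE /=.
  by rewrite !inordK.
have evenC (X : {set Site}) : ~~ odd #|X| -> ~~ odd #|~: X|.
  have := cardsC X; rewrite card_Site => /(congr1 odd); rewrite oddD.
  by case: (odd #|X|); case: (odd #|~: X|).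
rewrite inE catA mem_cat => /orP[/(allP even24)//|].
rewrite mem_cat => /orP[/mapP[X X2 ->]|].
  by apply: evenC; apply: (allP even24); rewrite mem_cat X2.
by rewrite inE => /eqP->; rewrite cardsT card_Site.
Qed.

Lemma card_rot r O : #|Defs.rot r O| = #|O|.
Proof. by rewrite rotE card_imset //; exact: shift_inj. Qed.

Definition sym (p : nat) (f : bool) (x : layer) : layer := [ffun i => f (+) x (rot4 p i)].

Lemma spin_addb (R : pzRingType) (f c : bool) :
  spin (f (+) c) = (if f then -1 else 1) * spin c :> R.
Proof. by case: f; case: c; rewrite /spin /= ?mul1r ?mulN1r ?opprK. Qed.

Lemma sigmaO_sym (R : comPzRingType) p f sa sb O :
  sigmaO (sym p f sa) (sym p f sb) O =
  (if f then -1 else 1) ^+ #|O| * sigmaO sa sb (shift p @: O) :> R.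
Proof.
rewrite /sigmaO big_imset /=; last by move=> t u _ _; exact: shift_inj.
rewrite -prodr_const -big_split /=; apply: eq_bigr => t _.
by rewrite -spin_addb; case: ifP => _; rewrite ffunE.
Qed.

Lemma Hm_sym (R : comPzRingType) (J : {set Site} -> R) p f sa sb :
  Hm J (sym p f sa) (sym p f sb) = Hm J sa sb.
Proof.
rewrite /Hm; congr (- _); apply: eq_bigr => al al_Phi; congr (_ * _).
have sign1 : (if f then -1 else 1) ^+ #|al| = 1 :> R.
  by case: f; rewrite ?expr1n // -signr_odd (negbTE (Phi_even al_Phi)).
under eq_bigr do rewrite sigmaO_sym card_rot sign1 mul1r shift_rot -rot_mod -rot4E.
by rewrite [RHS](reindex_inj (@rot4_inj p)).
Qed.

Definition bitn (k i : nat) : bool := odd (k.-1 %/ 2 ^ i).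

Definition index_of (b : nat -> bool) : nat := (1 + b 0 + 2 * b 1 + 4 * b 2 + 8 * b 3)%N.

Definition idx (x : layer) : nat := index_of (fun i => x (inord i)).

Lemma idx_state k : k \in iota 1 16 -> idx (state_of_index k) = k.
Proof.
have idx_bitn : all (fun k => index_of (bitn k) == k) (iota 1 16) by [].
move=> /(allP idx_bitn)/eqP {2}<-.
by rewrite /idx /index_of !ffunE !inordK.
Qed.

Lemma state_idx x : state_of_index (idx x) = x.
Proof.
apply/ffunP => i; rewrite ffunE -[x i](congr1 x (inord_val i)).
case: i => [[|[|[|[|m]]]] i_lt] //=; rewrite /idx /index_of;
by case: (x (inord 0)); case: (x (inord 1)); case: (x (inord 2)); case: (x (inord 3)).
Qed.

Lemma idx_mem x : idx x \in iota 1 16.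
Proof.
rewrite /idx /index_of.
by case: (x (inord 0)); case: (x (inord 1)); case: (x (inord 2)); case: (x (inord 3)).
Qed.

Lemma sum_layers (R : realType) (F : layer -> R) :
  \sum_x F x = \sum_(k <- iota 1 16) F (state_of_index k).
Proof.
rewrite -(big_map state_of_index xpredT) -big_enum; apply: perm_big.
apply: uniq_perm; first exact: enum_uniq.
  rewrite map_inj_in_uniq ?iota_uniq // => k l k_in l_in /(congr1 idx).
  by rewrite !idx_state.
move=> x; rewrite mem_enum; apply/esym/mapP.
by exists (idx x); rewrite ?idx_mem ?state_idx.
Qed.

Definition okn (k : nat) : bool :=
  ~~ [|| bitn k 0 && bitn k 1, bitn k 1 && bitn k 2, bitn k 2 && bitn k 3 | bitn k 3 && bitn k 0].

Definition okL (x : layer) : bool := ~~ [exists i : 'I_4, x i && x (ordS i)].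

Lemma exists_ord4 (P : pred 'I_4) :
  [exists i, P i] = [|| P (inord 0), P (inord 1), P (inord 2) | P (inord 3)].
Proof.
apply/existsP/idP => [[i]|]; last by case/or4P => Pi; eexists; exact: Pi.
by rewrite -[i]inord_val; case: i => [[|[|[|[|m]]]] i_lt] //= ->; rewrite ?orbT.
Qed.

Lemma okL_state k : okL (state_of_index k) = okn k.
Proof. by rewrite /okL exists_ord4 !ffunE /= !inordK // !orbA. Qed.

Definition sym_idx p f k := index_of (fun i => f (+) bitn k ((i + p) %% 4)%N).

Lemma sym_state p f k : sym p f (state_of_index k) = state_of_index (sym_idx p f k).
Proof. by rewrite -[LHS]state_idx /idx /index_of !ffunE !rot4E !inordK. Qed.

Definition rotations : seq (nat * bool) := [seq (p, false) | p <- iota 0 4].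
Definition rotations_flips : seq (nat * bool) :=
  [seq (p, f) | p <- iota 0 4, f <- [:: false; true]].

Definition cls (G : seq (seq nat)) (k : nat) : nat := find (fun c => k \in c) G.

(* [G] splits the state indices [dom] into classes that every symmetry [(p, f)]
   of [S] (rotation by [p], global spin flip if [f]) permutes, [rows] holds a
   representative of each class, and every state of [dom] is moved onto the
   representative of its class by some symmetry of [S]. *)
Definition lumping (S : seq (nat * bool)) (G : seq (seq nat)) (rows dom : seq nat) : bool :=
  [&& perm_eq dom (flatten G),
      all (fun k => (k \in iota 1 16) && (cls G k < size G)%N) dom,
      all (fun j => (nth 0 rows j \in dom) && (cls G (nth 0 rows j) == j)) (iota 0 (size G)),
      all (fun j => all (fun l => cls G l == j) (nth [::] G j)) (iota 0 (size G)),
      all (fun pf => all (fun c => perm_eq (map (sym_idx pf.1 pf.2) c) c) G) S &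
      all (fun k => has (fun pf => sym_idx pf.1 pf.2 k == nth 0 rows (cls G k)) S) dom].

Lemma lumping_tau : lumping rotations_flips G_tau rows_tau (iota 1 16).
Proof. by vm_compute. Qed.

Lemma lumping_tau' : lumping rotations G_tau' rows_tau' [seq k <- iota 1 16 | okn k].
Proof. by vm_compute. Qed.

Definition lab (G : seq (seq nat)) n (x : layer) : 'I_n.+1 := inord (cls G (idx x)).

Section TransferMatrix.
Variables (R : realType) (J : {set Site} -> R) (kB T : R).

Definition W (x y : layer) : R := expR (- Hm J x y / (kB * T)).
Definition W' (x y : layer) : R := if okL x && okL y then W x y else 0.

Lemma sum_lumping S G rows dom x (v : nat -> R) : lumping S G rows dom -> idx x \in dom ->
  \sum_(k <- dom) W x (state_of_index k) * v (cls G k) =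
  \sum_(j < size G) (\sum_(l <- nth [::] G j)
     W (state_of_index (nth 0 rows (cls G (idx x)))) (state_of_index l)) * v j.
Proof.
case/and5P=> domG _ _ clsG /andP[symG reps] x_dom.
have [[p f] pf_S /eqP /= sym_x] := hasP (allP reps _ x_dom).
rewrite (perm_big _ domG) big_flatten (big_nth [::]) big_mkord; apply: eq_bigr => j _.
have Gj_in : nth [::] G j \in G by rewrite mem_nth.
have j_in : (j : nat) \in iota 0 (size G) by rewrite mem_iota ltn_ord.
rewrite big_seq_cond (eq_bigr (fun l => W x (state_of_index l) * v j)); last first.
  by move=> l /andP[l_in _]; rewrite (eqP (allP (allP clsG j j_in) l l_in)).
rewrite -big_seq_cond -mulr_suml -sym_x; congr (_ * _).
rewrite -[RHS](perm_big _ (allP (allP symG _ pf_S) _ Gj_in)) big_map.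
apply: eq_bigr => l _; rewrite -!sym_state state_idx.
by rewrite /W Hm_sym.
Qed.

Lemma lumping_rep S G rows dom j : lumping S G rows dom -> (j < size G)%N ->
  nth 0 rows j \in dom /\ cls G (nth 0 rows j) = j.
Proof.
case/and5P=> _ _ repG _ _ j_lt.
have j_in : j \in iota 0 (size G) by rewrite mem_iota.
by case/andP: (allP repG j j_in) => -> /eqP->.
Qed.

Lemma sum_lumping_mx S G rows dom n (A : 'M[R]_n.+1) x (v : 'I_n.+1 -> R) :
  lumping S G rows dom -> size G = n.+1 ->
  (forall i j, A i j = \sum_(l <- nth [::] G j)
                        W (state_of_index (nth 0 rows i)) (state_of_index l)) ->
  idx x \in dom ->
  \sum_(k <- dom) W x (state_of_index k) * v (inord (cls G k)) =
  \sum_j A (lab G n x) j * v j.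
Proof.
move=> lumpG sizeG AE x_dom.
have cls_lt : (cls G (idx x) < n.+1)%N.
  by case/and5P: lumpG => _ /allP/(_ _ x_dom)/andP[_]; rewrite sizeG.
rewrite (sum_lumping (fun k => v (inord k)) lumpG x_dom).
move: sizeG; move: (size G) => m ->.
by apply: eq_bigr => j _; rewrite AE /lab inordK ?inord_val.
Qed.

Lemma W_lump x (v : 'I_4 -> R) :
  \sum_y W x y * v (lab G_tau 3 y) = \sum_j tau J kB T (lab G_tau 3 x) j * v j.
Proof.
rewrite -(sum_lumping_mx v lumping_tau) ?idx_mem //; last by move=> i j; rewrite mxE.
rewrite sum_layers big_seq [RHS]big_seq; apply: eq_bigr => k k_in.
by rewrite /lab idx_state.
Qed.

Lemma W'_lump x (v : 'I_3 -> R) : okL x ->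
  \sum_(y | okL y) W' x y * v (lab G_tau' 2 y) = \sum_j tau' J kB T (lab G_tau' 2 x) j * v j.
Proof.
move=> ok_x; rewrite -(sum_lumping_mx v lumping_tau') //; first last.
- by rewrite mem_filter -okL_state state_idx ok_x idx_mem.
- by move=> i j; rewrite mxE.
rewrite (eq_bigr (fun y => W x y * v (lab G_tau' 2 y))); last first.
  by move=> y ok_y; rewrite /W' ok_x ok_y.
rewrite big_mkcond sum_layers big_filter [RHS]big_mkcond big_seq [RHS]big_seq.
by apply: eq_bigr => k k_in; rewrite okL_state /lab idx_state.
Qed.

Lemma Z_trace M : Z J kB T M.+1 = \sum_x kpow W M.+1 x x.
Proof.
rewrite /Z -sum_cycle; apply: eq_bigr => s _.
by rewrite /Ham -sumrN mulr_suml expR_sum.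
Qed.

Lemma Z'_trace M : Z' J kB T M.+1 = \sum_x kpow W' M.+1 x x.
Proof.
rewrite /Z' -sum_cycle big_mkcond /=; apply: eq_bigr => s _.
have -> : ~~ percolation s = [forall m, okL (s m)] by rewrite /percolation negb_exists.
case: (boolP [forall m, _]) => [/forallP ok_s | /forallPn[m /negbTE nok_m]].
  rewrite /Ham -sumrN mulr_suml expR_sum; apply: eq_bigr => m _.
  by rewrite /W' !ok_s.
by rewrite (bigD1 m) //= /W' nok_m mul0r.
Qed.

Lemma ln_Z_growth lam : root (char_poly (tau J kB T)) lam ->
  (forall x, root (char_poly (tau J kB T)) x -> x <= lam) ->
  [/\ 0 < lam, forall M, 0 < Z J kB T M.+1 &
      (fun M => ln (Z J kB T M) / M%:R) @ \oo --> ln lam].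
Proof.
move=> lam_root lam_max.
have W_ge0 x y : 0 <= W x y by exact/ltW/expR_gt0.
have W_gt0 x y : predT x -> predT y -> 0 < W x y by move=> _ _; exact: expR_gt0.
have W_eq0 x y : ~~ (predT x && predT y) -> W x y = 0 by [].
have lab_surj j : exists2 x, predT x & lab G_tau 3 x = j.
  exists (state_of_index (nth 0 rows_tau j)) => //.
  have [r_in r_cls] := lumping_rep lumping_tau (ltn_ord j).
  by rewrite /lab idx_state // r_cls inord_val.
exact: (ln_lumped_growth W_ge0 W_gt0 W_eq0 lab_surj (fun x v _ => W_lump x v)
  lam_root lam_max Z_trace).
Qed.

Lemma ln_Z'_growth mu : root (char_poly (tau' J kB T)) mu ->
  (forall x, root (char_poly (tau' J kB T)) x -> x <= mu) ->
  [/\ 0 < mu, forall M, 0 < Z' J kB T M.+1 &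
      (fun M => ln (Z' J kB T M) / M%:R) @ \oo --> ln mu].
Proof.
move=> mu_root mu_max.
have W'_ge0 x y : 0 <= W' x y by rewrite /W'; case: ifP => // _; exact/ltW/expR_gt0.
have W'_gt0 x y : okL x -> okL y -> 0 < W' x y.
  by move=> ok_x ok_y; rewrite /W' ok_x ok_y; exact: expR_gt0.
have W'_eq0 x y : ~~ (okL x && okL y) -> W' x y = 0 by rewrite /W' => /negbTE->.
have lab_surj j : exists2 x, okL x & lab G_tau' 2 x = j.
  have [r_in r_cls] := lumping_rep lumping_tau' (ltn_ord j).
  move: r_in; rewrite mem_filter => /andP[r_ok r_in].
  exists (state_of_index (nth 0 rows_tau' j)); first by rewrite okL_state.
  by rewrite /lab idx_state // r_cls inord_val.
exact: (ln_lumped_growth W'_ge0 W'_gt0 W'_eq0 lab_surj W'_lump mu_root mu_max Z'_trace).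
Qed.

End TransferMatrix.

Theorem theorem2 (R : realType) (J : {set Site} -> R) (kB T lam mu : R) :
  0 < kB -> 0 < T ->
  root (char_poly (tau J kB T)) lam ->
  (forall x : R, root (char_poly (tau J kB T)) x -> x <= lam) ->
  root (char_poly (tau' J kB T)) mu ->
  (forall x : R, root (char_poly (tau' J kB T)) x -> x <= mu) ->
  (fun M : nat => ln (PM J kB T M) / M%:R) @ \oo --> ln (mu / lam).
Proof.
(* The weights are positive whatever the signs of [kB] and [T]. *)
move=> _ _ lam_root lam_max mu_root mu_max.
have [lam_gt0 Z_gt0 lnZ] := ln_Z_growth lam_root lam_max.
have [mu_gt0 Z'_gt0 lnZ'] := ln_Z'_growth mu_root mu_max.
rewrite lnM ?lnV ?posrE ?invr_gt0 //.
exact: ln_div_cvg.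
Qed.
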